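(* Consider the networked SIR epidemic-opinion model described in the context, under the standing assumption stated there. Every equilibrium $(s_e,x_e,o_e)\in[0,1]^{3n}$ of the model has the form $(s_e,\mathbf 0,(\bar L+I_n)^{-1}(\mathbf 1_n-s_e))$ with $s_e\in[0,1]^n$; conversely, for every $s_e\in[0,1]^n$ the point $(s_e,\mathbf 0,(\bar L+I_n)^{-1}(\mathbf 1_n-s_e))$ is an equilibrium, and $[(\bar L+I_n)^{-1}(\mathbf 1_n-s_e)]_i\in[0,1]$ for all $i\in[n]$.
   Context: There are $n$ communities. For $t\ge0$ and $i\in[n]$, $s_i(t),x_i(t),o_i(t)\in[0,1]$ denote the susceptible proportion, infected proportion and opinion of community $i$. The disease transmission network is a directed graph $\mathcal G=(\mathcal V,\mathcal E)$ on $n$ nodes with edge weights $\beta_{ij}>0$ if $(v_j,v_i)\in\mathcal E$ (and $\beta_{ij}=0$ otherwise); $\mathcal N_i=\{v_j:(v_j,v_i)\in\mathcal E\}$. The opinion network is a directed graph $\bar{\mathcal G}$ on the same nodes with nonnegative weights $\bar a_{ij}$ and Laplacian $\bar L=\mathrm{diag}(k_1,\dots,k_n)-\bar A$, where $[\bar A]_{ij}=\bar a_{ij}$ and $k_i=\sum_j \bar a_{ij}$. Parameters: $\beta_{\min}>0$, $\gamma_{\min}>0$, recovery rates $\gamma_i$. The model is $\dot s_i=-s_i\sum_{j\in\mathcal N_i}\big(\beta_{ij}-(\beta_{ij}-\beta_{\min})o_i\big)x_j$, $\dot x_i=s_i\sum_{j\in\mathcal N_i}\big(\beta_{ij}-(\beta_{ij}-\beta_{\min})o_i\big)x_j-\big(\gamma_{\min}+(\gamma_i-\gamma_{\min})o_i\big)x_i$,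 $\dot o=(\mathbf 1_n-s)-(\bar L+I_n)o$. Standing assumption: $\gamma_i\ge\gamma_{\min}>0$, $\beta_{ij}\ge\beta_{\min}>0$ for all $j\in\mathcal N_i$, and both $\mathcal G$ and $\bar{\mathcal G}$ are strongly connected. *)

From mathcomp Require Import all_boot all_order all_algebra.
From mathcomp Require Import reals.
Set Implicit Arguments. Unset Strict Implicit. Unset Printing Implicit Defensive.
Import Order.TTheory GRing.Theory Num.Theory.
Local Open Scope ring_scope.

Section Model.
Variable R : realType.
Variable n : nat.

(* E i j : the disease network has the edge (v_j, v_i), i.e. v_j \in N_i *)
Definition laplacian (abar : 'M[R]_n) : 'M[R]_n :=
  diag_mx (\row_i (\sum_j abar i j)) - abar.

Definition strongly_connected (edge : rel 'I_n) : Prop :=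
  forall u v : 'I_n, connect edge u v.

Definition infection (E : rel 'I_n) (beta : 'M[R]_n) (bmin : R)
    (o x : 'cV[R]_n) (i : 'I_n) : R :=
  \sum_(j | E i j) (beta i j - (beta i j - bmin) * o i 0) * x j 0.

Definition s_dot E beta bmin (s x o : 'cV[R]_n) (i : 'I_n) : R :=
  - (s i 0 * infection E beta bmin o x i).

Definition x_dot E beta bmin (gamma : 'I_n -> R) (gmin : R)
    (s x o : 'cV[R]_n) (i : 'I_n) : R :=
  s i 0 * infection E beta bmin o x i - (gmin + (gamma i - gmin) * o i 0) * x i 0.

Definition o_dot (abar : 'M[R]_n) (s o : 'cV[R]_n) : 'cV[R]_n :=
  (const_mx 1 - s) - (laplacian abar + 1%:M) *m o.

Definition equilibrium E beta bmin gamma gmin abar (s x o : 'cV[R]_n) : Prop :=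
  (forall i, s_dot E beta bmin s x o i = 0) /\
  (forall i, x_dot E beta bmin gamma gmin s x o i = 0) /\
  o_dot abar s o = 0.

Definition in01 (v : 'cV[R]_n) : Prop := forall i, 0 <= v i 0 <= 1.

End Model.

(** The matrix [M = L + I] of the opinion dynamics satisfies a discrete
    maximum principle: at an index [k] where [v] is largest,
    [(M v)_k = v_k + sum_j a_kj (v_k - v_j) >= v_k] because the weights are
    nonnegative, so [M v <= c] entrywise forces [v <= c]; symmetrically for
    lower bounds.  Hence [M v = 0] only for [v = 0], so [M] is invertible, and
    [M^-1] maps [[0,1]^n] into itself.  At an equilibrium, adding the [s]- and
    [x]-equations leaves [(gmin + (gamma_i - gmin) o_i) x_i = 0] with a positive
    recovery rate, so [x = 0]; conversely [x = 0] kills the infection terms and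
    leaves only the linear equation [M o = 1 - s]. *)

From mathcomp Require Import all_boot all_order all_algebra.
From mathcomp Require Import reals.
Set Implicit Arguments. Unset Strict Implicit. Unset Printing Implicit Defensive.
Import Order.TTheory GRing.Theory Num.Theory.
Local Open Scope ring_scope.

Lemma unitmx_cV_inj (F : fieldType) (n : nat) (A : 'M[F]_n) :
  (forall v : 'cV_n, A *m v = 0 -> v = 0) -> A \in unitmx.
Proof.
move=> Ainj; rewrite -unitmx_tr -row_free_unit; apply: inj_row_free => v vA0.
by rewrite -[v]trmxK [v^T]Ainj ?trmx0 // -[A]trmxK -trmx_mul vA0 trmx0.
Qed.

Section LaplacianMaximumPrinciple.

Variables (R : realType) (n : nat) (abar : 'M[R]_n).
Hypothesis abar_ge0 : forall i j, 0 <= abar i j.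

Let M := laplacian abar + 1%:M.

Lemma laplacian1_mulmxE (v : 'cV[R]_n) i :
  (M *m v) i 0 = v i 0 + \sum_j abar i j * (v i 0 - v j 0).
Proof.
rewrite /M /laplacian mulmxDl mulmxBl mul1mx mul_diag_mx !mxE.
under [in RHS]eq_bigr do rewrite mulrBr.
by rewrite sumrB -mulr_suml addrC.
Qed.

Lemma laplacian1_max_principle (v : 'cV[R]_n) (c : R) :
  (forall i, (M *m v) i 0 <= c) -> forall i, v i 0 <= c.
Proof.
move=> Mv_le i.
have [k _ vk_max] := @arg_maxP _ _ _ i xpredT (fun j => v j 0) isT.
apply: le_trans (vk_max i isT) (le_trans _ (Mv_le k)).
rewrite laplacian1_mulmxE lerDl.
by apply: sumr_ge0 => j _; rewrite mulr_ge0 // subr_ge0; exact: vk_max.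
Qed.

Lemma laplacian1_min_principle (v : 'cV[R]_n) (c : R) :
  (forall i, c <= (M *m v) i 0) -> forall i, c <= v i 0.
Proof.
move=> Mv_ge i; have -> : (c <= v i 0) = ((- v) i 0 <= - c) by rewrite mxE lerN2.
by apply: laplacian1_max_principle => k; rewrite mulmxN mxE lerN2.
Qed.

Lemma laplacian1_unitmx : M \in unitmx.
Proof.
apply: unitmx_cV_inj => v Mv0; apply/matrixP => i j; rewrite (ord1 j) mxE.
apply/le_anti/andP; split.
- by apply: laplacian1_max_principle => k; rewrite Mv0 mxE.
- by apply: laplacian1_min_principle => k; rewrite Mv0 mxE.
Qed.

Lemma laplacian1_in01 (v : 'cV[R]_n) : in01 (M *m v) -> in01 v.
Proof.
move=> Mv01 i; apply/andP; split.
- by apply: laplacian1_min_principle => k; case/andP: (Mv01 k).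
- by apply: laplacian1_max_principle => k; case/andP: (Mv01 k).
Qed.

End LaplacianMaximumPrinciple.

Lemma in01_const1B (R : realType) (n : nat) (s : 'cV[R]_n) :
  in01 s -> in01 (const_mx 1 - s).
Proof.
move=> s01 i; have /andP[s_ge0 s_le1] := s01 i.
by rewrite !mxE subr_ge0 s_le1 lerBlDr lerDl s_ge0.
Qed.

Lemma o_dot_eq0 (R : realType) (n : nat) (abar : 'M[R]_n) :
  laplacian abar + 1%:M \in unitmx -> forall s o : 'cV[R]_n,
  (o_dot abar s o = 0 <-> o = invmx (laplacian abar + 1%:M) *m (const_mx 1 - s)).
Proof.
move=> M_unit s o; rewrite /o_dot; split => [/eqP|->].
- by rewrite subr_eq0 => /eqP ->; rewrite mulKmx.
- by rewrite mulKVmx // subrr.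
Qed.

Section Equilibria.

Variables (R : realType) (n : nat).
Variables (E : rel 'I_n) (beta : 'M[R]_n) (bmin : R).
Variables (gamma : 'I_n -> R) (gmin : R) (abar : 'M[R]_n).

Lemma infection_x0 (o : 'cV[R]_n) i : infection E beta bmin o 0 i = 0.
Proof. by rewrite /infection big1 // => j _; rewrite mxE mulr0. Qed.

Lemma s_dotDx_dot (s x o : 'cV[R]_n) i :
  s_dot E beta bmin s x o i + x_dot E beta bmin gamma gmin s x o i =
  - ((gmin + (gamma i - gmin) * o i 0) * x i 0).
Proof. by rewrite /s_dot /x_dot addrA addNr add0r. Qed.

Lemma equilibrium_x_eq0 (s x o : 'cV[R]_n) :
  0 < gmin -> (forall i, gmin <= gamma i) -> (forall i, 0 <= o i 0) ->
  equilibrium E beta bmin gamma gmin abar s x o -> x = 0.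
Proof.
move=> gmin_gt0 gamma_ge o_ge0 [s_eq [x_eq _]].
apply/matrixP => i j; rewrite (ord1 j) mxE.
have rate_gt0 : 0 < gmin + (gamma i - gmin) * o i 0.
  by rewrite ltr_wpDr // mulr_ge0 // subr_ge0.
have /eqP := s_dotDx_dot s x o i.
by rewrite s_eq x_eq addr0 eq_sym oppr_eq0 mulf_eq0 gt_eqF //= => /eqP.
Qed.

Lemma equilibrium_x0 (s o : 'cV[R]_n) :
  equilibrium E beta bmin gamma gmin abar s 0 o <-> o_dot abar s o = 0.
Proof.
rewrite /equilibrium /s_dot /x_dot.
split=> [[_ [_ ->]] //| o_eq]; split=> [i|]; first by rewrite infection_x0 mulr0 oppr0.
by split=> // i; rewrite infection_x0 mxE !mulr0 subr0.
Qed.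

End Equilibria.

Theorem lemma3 (R : realType) (n : nat)
  (E : rel 'I_n) (beta : 'M[R]_n) (bmin : R)
  (gamma : 'I_n -> R) (gmin : R) (abar : 'M[R]_n)
  (hbmin : 0 < bmin) (hgmin : 0 < gmin)
  (hgamma : forall i, gmin <= gamma i)
  (hbetaE : forall i j, E i j -> bmin <= beta i j)
  (hbeta0 : forall i j, ~~ E i j -> beta i j = 0)
  (habar : forall i j, 0 <= abar i j)
  (hGsc : strongly_connected (fun u v : 'I_n => E v u))
  (hGbsc : strongly_connected (fun u v : 'I_n => abar v u != 0)) :
  let M := laplacian abar + 1%:M in
  M \in unitmx /\
  (forall s x o : 'cV[R]_n, in01 s -> in01 x -> in01 o ->
     equilibrium E beta bmin gamma gmin abar s x o ->
     x = 0 /\ o = invmx M *m (const_mx 1 - s)) /\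
  (forall s : 'cV[R]_n, in01 s ->
     equilibrium E beta bmin gamma gmin abar s 0 (invmx M *m (const_mx 1 - s))) /\
  (forall s : 'cV[R]_n, in01 s -> in01 (invmx M *m (const_mx 1 - s))).
Proof.
move=> M.
have M_unit : M \in unitmx by exact: laplacian1_unitmx.
split=> //; split; [|split].
- move=> s x o _ _ o01 eq_sxo.
  have x0 : x = 0.
    by apply: equilibrium_x_eq0 eq_sxo => // i; case/andP: (o01 i).
  split=> //; apply/(o_dot_eq0 M_unit).
  by move: eq_sxo; rewrite x0 => /equilibrium_x0.
- by move=> s _; apply/equilibrium_x0/(o_dot_eq0 M_unit).
- move=> s s01; apply: (laplacian1_in01 habar).
  by rewrite -/M mulKVmx //; exact: in01_const1B.
Qed.
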